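(* Let $M^*$ be any maximum-weight perfect matching of $G$, and for $b\in B$ let $M^*(b)$ be the item matched to $b$. Then for any agents $i,j$ and any $c\in[m-1]$, $v_{i,M^*(b_{(i,c)})}\ge v_{i,M^*(b_{(j,c+1)})}$ (dummy items having value $0$ for every agent).
   Context: Setting: $n$ agents, $m$ real items $\mathcal M$, restricted additive valuations: there are values $v(g)>0$ with $v_{i,g}\in\{0,v(g)\}$ and $v_i(S)=\sum_{g\in S}v_{i,g}$; every real item is valued positively by at least one agent. Let $u_1>u_2>\dots>u_t$ be the distinct values in $\{v(g):g\in\mathcal M\}$ and $\mathcal M_f=\{g:v(g)=u_f\}$. Add a set $\mathcal M_d$ of $mn-m$ dummy items valued $0$ by all agents. The bipartite graph $G$ has left side $A=\{a_g: g\in\mathcal M\cup\mathcal M_d\}$ ($mn$ vertices) and right side $B=\{b_{(i,c)}: i\in[n], c\in[m]\}$; the set $\mathcal N_c=\{b_{(i,c)}:i\in[n]\}$ is called bucket $c$. Edges: for each real $g\in\mathcal M_f$, each agent $i$ with $v_{i,g}>0$ and each $c\in[m]$, an edge $(a_g,b_{(i,c)})$ of weight $-m^{t-f}\cdot c$; for each dummy $g$ and all $i,c$, an edge $(a_g,b_{(i,c)})$ of weight $0$; no other edges. *)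

From mathcomp Require Import all_boot all_order all_algebra.
Set Implicit Arguments. Unset Strict Implicit. Unset Printing Implicit Defensive.
Import Order.TTheory GRing.Theory Num.Theory.
Local Open Scope ring_scope.

(* Left side A: real items 'I_m (inl) and m*n - m dummy items (inr). *)
Definition item (n m : nat) : finType := ('I_m + 'I_(m * n - m))%type.
(* Right side B: vertices b_(i,c), i an agent, c a bucket.
   Buckets are 0-indexed: ordinal c stands for bucket c+1 of the paper. *)
Definition slot (n m : nat) : finType := ('I_n * 'I_m)%type.

Section Defs.
Variables (R : realFieldType) (n m : nat).
Variables (v : 'I_m -> R) (val : 'I_n -> 'I_m -> R).

Definition itemval (i : 'I_n) (a : item n m) : R :=
  match a with inl g => val i g | inr _ => 0 end.

(* t - f, where u_f = v g: number of distinct item values strictly below v g *)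
Definition rank_below (g : 'I_m) : nat :=
  size (undup [seq v h | h <- enum 'I_m & v h < v g]).

Definition is_edge (a : item n m) (b : slot n m) : bool :=
  match a with inl g => val b.1 g > 0 | inr _ => true end.

Definition edge_weight (a : item n m) (b : slot n m) : int :=
  match a with
  | inl g => - ((m ^ rank_below g * (b.2 + 1))%N)%:Z
  | inr _ => 0
  end.

(* A perfect matching of G, given as the map b |-> M(b) from B to A:
   a bijection using only edges of G. *)
Definition perfect_matching (M : slot n m -> item n m) : Prop :=
  bijective M /\ forall b, is_edge (M b) b.

Definition matching_weight (M : slot n m -> item n m) : int :=
  \sum_(b : slot n m) edge_weight (M b) b.

Definition max_weight_perfect_matching (M : slot n m -> item n m) : Prop :=
  perfect_matching M /\
  forall M', perfect_matching M' -> matching_weight M' <= matching_weight M.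
End Defs.

From mathcomp Require Import all_boot all_order all_algebra all_fingroup.
From mathcomp Require Import zify.
Import Order.TTheory GRing.Theory Num.Theory.
Local Open Scope ring_scope.
Set Implicit Arguments. Unset Strict Implicit.

(* All weights are non-positive, so a maximum-weight matching is one of
   minimum total cost, where a real item g placed in bucket c costs
   m^(rank g) * (c+1) and a dummy costs nothing.  Re-routing items along a
   permutation of slots that keeps every edge in G therefore never lowers the
   cost restricted to the moved slots (local_exchange); we use it for a swap
   of two slots and for a rotation of three.  The exponential scale of the
   costs gives m * m^(rank h) <= m^(rank g) whenever v h < v g (rank_gap).

   If agent i strictly preferred M(j,c+1) = g to M(i,c), three cases remain,
   each contradicted by one exchange: M(i,c) is a dummy (swap), M(i,c) = h
   with j = i (swap), or M(i,c) = h with j <> i, where agent i then owns a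
   dummy slot (agent_has_dummy) and g, h and that dummy rotate. *)

Section Exchange.
Variables (R : realFieldType) (n m : nat).
Variables (v : 'I_m -> R) (val : 'I_n -> 'I_m -> R).

Definition edge_cost (a : item n m) (b : slot n m) : nat :=
  match a with inl g => m ^ rank_below v g * (b.2 + 1) | inr _ => 0 end.

Lemma matching_weightE (M : slot n m -> item n m) :
  matching_weight v M = - ((\sum_b edge_cost (M b) b)%N%:R : int).
Proof.
rewrite /matching_weight natr_sum -sumrN; apply: eq_bigr => b _.
by case: (M b) => [g|g] //=; rewrite ?oppr0 // natz.
Qed.

Lemma cost_scale_gt0 (g : 'I_m) : (0 < m ^ rank_below v g)%N.
Proof. by rewrite expn_gt0 (leq_ltn_trans (leq0n g) (ltn_ord g)). Qed.

Lemma rank_below_lt (g h : 'I_m) :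
  v h < v g -> (rank_below v h < rank_below v g)%N.
Proof.
rewrite /rank_below => lt_hg.
have uniq_vh : uniq (v h :: undup [seq v y | y <- enum 'I_m & v y < v h]).
  rewrite /= undup_uniq andbT mem_undup; apply/negP => /mapP [y].
  by rewrite mem_filter => /andP [lt_yh _] eq_hy; rewrite eq_hy ltxx in lt_yh.
apply: (uniq_leq_size uniq_vh) => x; rewrite inE !mem_undup.
case/orP => [/eqP ->| /mapP [y]]; last rewrite mem_filter => /andP [lt_yh _] ->.
  by apply/mapP; exists h; rewrite // mem_filter lt_hg mem_enum.
by apply/mapP; exists y; rewrite // mem_filter mem_enum (lt_trans lt_yh lt_hg).
Qed.

Lemma rank_gap (g h : 'I_m) :
  v h < v g -> (m * m ^ rank_below v h <= m ^ rank_below v g)%N.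
Proof.
move=> lt_hg; have m_gt0 : (0 < m)%N by apply: leq_ltn_trans (ltn_ord g).
by rewrite -expnS leq_pexp2l // rank_below_lt.
Qed.

Lemma sum_split_seq (F : slot n m -> nat) (S : seq (slot n m)) : uniq S ->
  (\sum_b F b = \sum_(b <- S) F b + \sum_(b | b \notin S) F b)%N.
Proof. by move=> uniqS; rewrite (bigID (fun b => b \in S)) /= big_uniq. Qed.

Variable M : slot n m -> item n m.
Hypothesis maxM : max_weight_perfect_matching v val M.

Lemma local_exchange (sg : {perm slot n m}) (S : seq (slot n m)) :
  uniq S -> (forall b, b \notin S -> sg b = b) ->
  (forall b, is_edge val (M (sg b)) b) ->
  (\sum_(b <- S) edge_cost (M b) b <= \sum_(b <- S) edge_cost (M (sg b)) b)%N.
Proof.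
move: maxM => [[bijM _] max_weight] uniqS fixS edges.
have bij_sg : bijective sg by apply: injF_bij; apply: perm_inj.
have := max_weight _ (conj (bij_comp bijM bij_sg) edges).
rewrite !matching_weightE lerN2 ler_nat !(sum_split_seq _ uniqS) /=.
rewrite [X in (_ <= _ + X)%N](eq_bigr (fun b => edge_cost (M b) b)).
  by rewrite leq_add2r.
by move=> b /fixS ->.
Qed.

Lemma swap_exchange (a b : slot n m) :
  a != b -> is_edge val (M b) a -> is_edge val (M a) b ->
  (edge_cost (M a) a + edge_cost (M b) b
     <= edge_cost (M b) a + edge_cost (M a) b)%N.
Proof.
move=> neq_ab edge_ba edge_ab.
have edges : forall x, is_edge val (M (tperm a b x)) x.
  by move=> x; case: tpermP => [->|->|_ _] //; case: maxM => [[_ ->]].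
have fix_ab : forall x, x \notin [:: a; b] -> tperm a b x = x.
  by move=> x; rewrite !inE negb_or => /andP [xa xb]; rewrite tpermD // eq_sym.
have uniq_ab : uniq [:: a; b] by rewrite /= inE neq_ab.
have := local_exchange uniq_ab fix_ab edges.
by rewrite !big_cons !big_nil tpermL tpermR !addn0.
Qed.

Lemma rotate_exchange (a b e : slot n m) :
  uniq [:: a; b; e] ->
  is_edge val (M b) a -> is_edge val (M e) b -> is_edge val (M a) e ->
  (edge_cost (M a) a + edge_cost (M b) b + edge_cost (M e) e
     <= edge_cost (M b) a + edge_cost (M e) b + edge_cost (M a) e)%N.
Proof.
move=> uniq_abe; move: (uniq_abe).
rewrite /= !inE negb_or => /and3P [/andP [neq_ab neq_ae] neq_be _].
move=> edge_ba edge_eb edge_ae.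
set sg := (tperm a b * tperm a e)%g.
have sg_a : sg a = b by rewrite permM tpermL tpermD // eq_sym.
have sg_b : sg b = e by rewrite permM tpermR tpermL.
have sg_e : sg e = a by rewrite permM (tpermD neq_ae neq_be) tpermR.
have fix_abe : forall x, x \notin [:: a; b; e] -> sg x = x.
  move=> x; rewrite !inE !negb_or => /and3P [xa xb xe].
  by rewrite permM !tpermD // eq_sym.
have edges : forall x, is_edge val (M (sg x)) x.
  move=> x; case: (boolP (x \in [:: a; b; e])) => [|/fix_abe ->].
    by rewrite !inE => /or3P [] /eqP ->; rewrite ?sg_a ?sg_b ?sg_e.
  by case: maxM => [[_ ->]].
have := local_exchange uniq_abe fix_abe edges.
by rewrite !big_cons !big_nil sg_a sg_b sg_e !addn0 !addnA.
Qed.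

(* If another agent holds a real item, then agent i, owning m slots but
   not all m real items, owns a dummy. *)
Lemma agent_has_dummy (i j : 'I_n) (c g : 'I_m) :
  injective M -> M (j, c) = inl g -> i != j -> exists d x, M (i, d) = inr x.
Proof.
move=> injM Mjc neq_ij.
case: (pickP (fun d => if M (i, d) is inr _ then true else false)) => [d|real].
  by case Mid: (M (i, d)) => [//|x] _; exists d, x.
pose item_of d := if M (i, d) is inl x then x else g.
have real_of d : M (i, d) = inl (item_of d).
  by have := real d; rewrite /item_of; case: (M (i, d)).
have [unitem _ unitemK] : bijective item_of.
  by apply: injF_bij => d d' eq_dd'; have := real_of d;
    rewrite eq_dd' -real_of => /injM [].
have := real_of (unitem g); rewrite unitemK -Mjc => /injM [eq_ij _].
by rewrite eq_ij eqxx in neq_ij.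
Qed.

Lemma better_after_dummy (i : 'I_n) (b : slot n m) (c g : 'I_m) x :
  M (i, c) = inr x -> M b = inl g -> 0 < val i g -> (c < b.2)%N -> False.
Proof.
move=> Mic Mb val_ig lt_cb; have neq : (i, c) != b.
  by apply/eqP => eq_b; rewrite -eq_b ltnn in lt_cb.
have := swap_exchange neq; rewrite Mic Mb /= => /(_ val_ig isT).
by rewrite add0n addn0 leqNgt ltn_pmul2l ?cost_scale_gt0 // ltn_add2r lt_cb.
Qed.

Lemma better_same_agent (i : 'I_n) (c c' g h : 'I_m) :
  M (i, c) = inl h -> M (i, c') = inl g -> 0 < val i h -> 0 < val i g ->
  v h < v g -> (c < c')%N -> False.
Proof.
move=> Mic Mic' val_ih val_ig lt_hg lt_cc'; have neq : (i, c) != (i, c').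
  by apply/eqP => -[eq_cc']; rewrite eq_cc' ltnn in lt_cc'.
have := swap_exchange neq; rewrite Mic Mic' /= => /(_ val_ig val_ih).
have := rank_gap lt_hg; have := ltn_ord c'; have := cost_scale_gt0 h.
generalize (m ^ rank_below v h)%N (m ^ rank_below v g)%N => X Y; nia.
Qed.

Lemma better_other_agent (i j : 'I_n) (c c' d g h : 'I_m) x :
  M (i, c) = inl h -> M (j, c') = inl g -> M (i, d) = inr x ->
  0 < val i h -> 0 < val i g -> v h < v g -> (c < c')%N -> False.
Proof.
move=> Mic Mjc' Mid val_ih val_ig lt_hg lt_cc'.
have neq_ab : (i, c) != (j, c').
  by apply/eqP => -[_ eq_cc']; rewrite eq_cc' ltnn in lt_cc'.
have neq_ae : (i, c) != (i, d) by apply/eqP => eq_d; move: Mid; rewrite -eq_d Mic.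
have neq_be : (j, c') != (i, d) by apply/eqP => eq_d; move: Mid; rewrite -eq_d Mjc'.
have uniq_slots : uniq [:: (i, c); (j, c'); (i, d)].
  by rewrite /= !inE !negb_or neq_ab neq_ae neq_be.
have := rotate_exchange uniq_slots; rewrite Mic Mjc' Mid /=.
move=> /(_ val_ig isT val_ih).
have := rank_gap lt_hg; have := ltn_ord d; have := cost_scale_gt0 h.
generalize (m ^ rank_below v h)%N (m ^ rank_below v g)%N => X Y; nia.
Qed.

End Exchange.

Theorem mainTheorem9 (R : realFieldType) (n m : nat)
  (v : 'I_m -> R) (val : 'I_n -> 'I_m -> R)
  (v_pos : forall g, 0 < v g)
  (restricted : forall i g, val i g = 0 \/ val i g = v g)
  (valued : forall g, exists i, 0 < val i g)
  (M : slot n m -> item n m)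
  (hM : max_weight_perfect_matching v val M) :
  forall (i j : 'I_n) (c c' : 'I_m), nat_of_ord c' = (c + 1)%N ->
    itemval val i (M (j, c')) <= itemval val i (M (i, c)).
Proof.
move=> i j c c' c'E; rewrite leNgt; apply/negP => better.
have lt_cc' : (c < c')%N by rewrite c'E addn1.
have val_pos g : 0 < val i g -> val i g = v g.
  by case: (restricted i g) => -> //; rewrite ltxx.
have itemval_ge0 : 0 <= itemval val i (M (i, c)).
  by case: (M (i, c)) => //= g; case: (restricted i g) => -> //; apply: ltW.
case Mjc': (M (j, c')) better => [g|x] /= better; last first.
  by rewrite ltNge itemval_ge0 in better.
have val_ig : 0 < val i g := le_lt_trans itemval_ge0 better.
case Mic: (M (i, c)) better => [h|x] /= better; last first.
  exact: (better_after_dummy hM Mic Mjc' val_ig lt_cc').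
have val_ih : 0 < val i h by case: hM => [[_ /(_ (i, c))]]; rewrite Mic.
have lt_hg : v h < v g by rewrite -val_pos // -[v g]val_pos.
case: (eqVneq i j) Mjc' => [<-|neq_ij] Mjc'.
  exact: (better_same_agent hM Mic Mjc' val_ih val_ig lt_hg lt_cc').
have injM : injective M by case: hM => [[/bij_inj]].
have [d [x Mid]] := agent_has_dummy injM Mjc' neq_ij.
exact: (better_other_agent hM Mic Mjc' Mid val_ih val_ig lt_hg lt_cc').
Qed.
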